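(* Let $\mathcal{S}$ be the STAIR code with inside global parity symbols as defined in the context. Then: (a) the map sending $X\in\mathcal{S}$ to its entries at the data positions is a bijection from $\mathcal{S}$ onto $\mathbb{F}^{r(n-m)-s}$; that is, for every assignment of data symbols to the data positions there is exactly one array in $\mathcal{S}$ with those data symbols (so the inside global parity symbols and row parity symbols are uniquely determined, and in particular upstairs and downstairs encoding yield the same values); (b) $\mathcal{S}$ tolerates the following failures: let $F\subseteq\{0,\dots,n-1\}$ with $|F|\le m$, and for each $j\notin F$ let $L_j\subseteq\{0,\dots,r-1\}$, such that the number $t$ of $j\notin F$ with $L_j\ne\emptyset$ satisfies $t\le m'$ and the sorted nonzero sizes $f_0\le\cdots\le f_{t-1}$ of these $L_j$ satisfy $f_{t-1-i}\le e_{m'-1-i}$ for $0\le i\le t-1$. Then every $X\in\mathcal{S}$ is uniquely determined within $\mathcal{S}$ by its entries $X_{i,j}$ with $j\notin F$ and $i\notin L_j$.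
   Context: Parameters: integers $n,r,m,m'$ with $1\le m<n$, $1\le m'\le n-m$, and $\mathbf{e}=(e_0,\dots,e_{m'-1})$ with $0<e_0\le\cdots\le e_{m'-1}\le r$; $s=\sum_l e_l$. Field $\mathbb{F}=GF(2^w)$ with $n+m'\le 2^w$, $r+e_{m'-1}\le 2^w$. An $(\eta,\kappa)$-code is a linear MDS code of length $\eta$ and dimension $\kappa$ (any $\kappa$ coordinates determine the codeword); systematic means a codeword is the $\kappa$ input symbols followed by $\eta-\kappa$ parity symbols. $\mathcal{C}_{row}$ is a systematic $(n+m',n-m)$-code and $\mathcal{C}_{col}$ a systematic $(r+e_{m'-1},r)$-code over $\mathbb{F}$. Stair positions: $T=\{(i,\,n-m-m'+l): 0\le l\le m'-1,\ r-e_l\le i\le r-1\}$ (inside global parity symbol $\hat g_{h,l}$ sits at row $r-e_l+h$ of column $n-m-m'+l$). Data positions: all $(i,j)$ with $0\le i\le r-1$, $0\le j\le n-m-1$, $(i,j)\notin T$; there are $r(n-m)-s$ of them. Columns $n-m,\dots,n-1$ hold row parity symbols. $\mathcal{S}$ is the set of $r\times n$ arrays $X$ over $\mathbb{F}$ for which there exists an $r\times m'$ array $P'$ such that (i) for each row $i$, the vector $(X_{i,0},\dots,X_{i,n-1},P'_{i,0},\dots,P'_{i,m'-1})$ is a codeword of $\mathcal{C}_{row}$ (i.e., it is the $\mathcal{C}_{row}$-encoding of $(X_{i,0},\dots,X_{i,n-m-1})$); and (ii) for each $l$, encoding column $(P'_{0,l},\dots,P'_{r-1,l})$ with $\mathcal{C}_{col}$,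 the first $e_l$ of its $e_{m'-1}$ parity symbols are zero (the outside global parity symbols are fixed to zero). *)

From HB Require Import structures.
From mathcomp Require Import all_boot all_order all_algebra.
Set Implicit Arguments. Unset Strict Implicit. Unset Printing Implicit Defensive.
Import GRing.Theory.
Local Open Scope ring_scope.

Definition codeword (F : fieldType) (kappa eta : nat) (G : 'M[F]_(kappa, eta))
  (c : 'rV[F]_eta) : Prop := exists u : 'rV[F]_kappa, c = u *m G.

Definition systematic (F : fieldType) (kappa eta : nat) (G : 'M[F]_(kappa, eta))
  : Prop :=
  (kappa <= eta)%N /\
  forall (i : 'I_kappa) (j : 'I_eta), (j < kappa)%N ->
    G i j = (i == j :> nat)%:R.

Definition MDS (F : fieldType) (kappa eta : nat) (G : 'M[F]_(kappa, eta)) : Prop :=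
  forall c c' : 'rV[F]_eta, codeword G c -> codeword G c' ->
  forall S : {set 'I_eta}, #|S| = kappa ->
  (forall j, j \in S -> c 0 j = c' 0 j) -> c = c'.

Definition sys_MDS_code (F : fieldType) (kappa eta : nat) (G : 'M[F]_(kappa, eta))
  : Prop := systematic G /\ MDS G.

Definition stair_pos (n r m m' : nat) (e : nat -> nat) (i j : nat) : bool :=
  [exists l : 'I_m', (j == n - m - m' + l)%N && (r - e l <= i < r)%N].

Definition data_pos (n r m m' : nat) (e : nat -> nat) (i j : nat) : bool :=
  [&& (i < r)%N, (j < n - m)%N & ~~ stair_pos n r m m' e i j].

Arguments codeword : clear implicits.
Definition in_STAIR (F : fieldType) (n r m m' : nat) (e : nat -> nat)
  (Grow : 'M[F]_(n - m, n + m')) (Gcol : 'M[F]_(r, r + e m'.-1))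
  (X : 'M[F]_(r, n)) : Prop :=
  exists P' : 'M[F]_(r, m'),
    (forall i : 'I_r, codeword F (n - m) (n + m') Grow (row_mx (row i X) (row i P'))) /\
    (forall (l : 'I_m') (h : 'I_(e m'.-1)), (h < e l)%N ->
       (((col l P')^T *m Gcol) 0 (rshift r h) = 0)).

Definition fail_sizes (n r : nat) (Fs : {set 'I_n}) (L : 'I_n -> {set 'I_r})
  : seq nat :=
  sort leq [seq #|L j| | j <- enum 'I_n & (j \notin Fs) && (L j != set0)].
Arguments in_STAIR F n r m m' e Grow Gcol X : clear implicits.

From HB Require Import structures.
From mathcomp Require Import all_boot all_order all_algebra zify.
Import GRing.Theory.

(* Combining the rows of a STAIR array
   (extended by P') with the h-th parity column of Gcol yields, by linearity, a codeword of
   Grow whose entries are the h-th column parities of all n + m' columns. Induct on h: when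
   every surviving column with at most h erasures is known, the h-th such row is known on the
   columns with at most h erasures and on the global parity columns l with e_l > h, which the
   size condition makes n - m coordinates, so it is recovered; then a column with at most
   h + 1 erasures has r - (h + 1) survivors and h + 1 known parities, and Gcol recovers it.
   For (a), erasing the row parity columns and the stair is such a pattern, so sending a message
   array to its data symbols and outside global parities is injective, hence bijective since
   F is finite; the preimage of the given data with zero outside parities is the array. *)

Set Implicit Arguments. Unset Strict Implicit. Unset Printing Implicit Defensive.

Lemma card_ord_ltn (N k : nat) : k <= N -> #|[set i : 'I_N | i < k]| = k.
Proof.
move=> kN; have -> : [set i : 'I_N | i < k] = widen_ord kN @: [set: 'I_k].
  apply/setP=> i; rewrite inE; apply/idP/imsetP => [ik | [j _ ->]]; last by rewrite /= ltn_ord.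
  by exists (Ordinal ik) => //; apply/val_inj.
rewrite card_imset ?cardsT ?card_ord //.
by move=> x y /(congr1 val) /= /val_inj.
Qed.

Lemma card_ord_geq (N k : nat) : k <= N -> #|[set i : 'I_N | k <= i]| = N - k.
Proof.
move=> kN; have := cardsC [set i : 'I_N | i < k]; rewrite card_ord_ltn // card_ord.
have -> : ~: [set i : 'I_N | i < k] = [set i : 'I_N | k <= i].
  by apply/setP=> i; rewrite !inE -leqNgt.
lia.
Qed.

Lemma card_lshift_rshift (a b : nat) (A : {set 'I_a}) (B : {set 'I_b}) :
  #|(@lshift a b @: A) :|: (@rshift a b @: B)| = #|A| + #|B|.
Proof.
rewrite cardsU !card_imset; [| exact: rshift_inj | exact: lshift_inj].
suff -> : (@lshift a b @: A) :&: (@rshift a b @: B) = set0 by rewrite cards0 subn0.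
apply/setP=> x; rewrite !inE; apply/negbTE/negP => /andP[/imsetP[y _ ->] /imsetP[z _]].
by move/(congr1 val) => /=; have := ltn_ord y; lia.
Qed.

Lemma card_notin_split (T : finType) (A : {set T}) (p : pred T) :
  #|[set x | (x \notin A) && p x]| + #|[set x | (x \notin A) && ~~ p x]| = #|T| - #|A|.
Proof.
rewrite -(cardsC A) addKn -(cardsID [set x | p x] (~: A)).
by congr (_ + _); apply: eq_card => x; rewrite !inE // andbC.
Qed.

Lemma sorted_nth_count_gt (h : nat) (s : seq nat) :
  sorted leq s -> 0 < count (ltn h) s -> h < nth 0 s (size s - count (ltn h) s).
Proof.
elim: s => [//| x s IH] /= x_s.
have s_sorted : sorted leq s by apply: path_sorted x_s.
have x_min : all (leq x) s by apply: order_path_min leq_trans x_s.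
case: (ltnP h x) => hx.
  have -> : count (ltn h) s = size s.
    apply/eqP; rewrite -all_count; apply/allP => y ys.
    exact: leq_trans hx (allP x_min y ys).
  by rewrite add1n subnn.
rewrite add0n => c_gt0.
have c_le := count_size (ltn h) s.
by rewrite subSn // IH.
Qed.

(* The size condition of (b), in the counting form the induction on h consumes. *)
Definition tolerable (n r m' : nat) (e : nat -> nat) (Fs : {set 'I_n})
    (L : 'I_n -> {set 'I_r}) :=
  forall h, #|[set j | (j \notin Fs) && (h < #|L j|)]| <= #|[set l : 'I_m' | h < e l]|.

Lemma fail_sizes_tolerable (n r m' : nat) (e : nat -> nat) (Fs : {set 'I_n})
    (L : 'I_n -> {set 'I_r}) :
  {in gtn m' &, {homo e : a b / a <= b}} ->
  let f := fail_sizes Fs L in let t := size f in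
  t <= m' -> (forall i, i < t -> nth 0 f (t - 1 - i) <= e (m' - 1 - i)) ->
  tolerable m' e Fs L.
Proof.
move=> e_mono f t t_le f_le h.
have -> : #|[set j | (j \notin Fs) && (h < #|L j|)]| = count (ltn h) f.
  rewrite cardsE cardE /enum_mem size_filter /f /fail_sizes.
  rewrite count_sort count_map count_filter enumT; apply: eq_count => j /=.
  rewrite unfold_in /=; case: ltnP => hL; rewrite ?andbF //.
  by rewrite -(card_gt0 (L j)) (leq_ltn_trans _ hL).
set c := count _ f; have [-> // | c_gt0] := posnP c.
have f_sorted : sorted leq f by apply: sort_sorted; exact: leq_total.
have h_lt := sorted_nth_count_gt f_sorted c_gt0.
have c_le_t : c <= t := count_size _ _.
have c_le_m' : c <= m' := leq_trans c_le_t t_le.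
have := f_le c.-1 ltac:(lia).
have -> : t - 1 - c.-1 = t - c by lia.
have -> : m' - 1 - c.-1 = m' - c by lia.
move=> nth_le; rewrite -{1}(subKn c_le_m') -card_ord_geq ?leq_subr //.
apply/subset_leq_card/subsetP => l; rewrite !inE => l_ge.
apply: leq_trans (leq_trans h_lt nth_le) _.
by apply: e_mono; rewrite /in_mem //= -subn_gt0 subKn.
Qed.

Section ErasurePattern.
Variables (n r m m' : nat) (e : nat -> nat).

Definition stair_cell (l : 'I_m') (i j : nat) : bool :=
  (j == n - m - m' + l) && (r - e l <= i < r).

Definition parity_cols : {set 'I_n} := [set j : 'I_n | n - m <= j].

Definition stair_rows (j : 'I_n) : {set 'I_r} := [set i : 'I_r | stair_pos n r m m' e i j].

Lemma card_parity_cols : #|parity_cols| <= m.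
Proof. by rewrite card_ord_geq ?leq_subr //; lia. Qed.

Lemma data_pos_survivor (i : 'I_r) (j : 'I_n) :
  j \notin parity_cols -> i \notin stair_rows j -> data_pos n r m m' e i j.
Proof. by rewrite !inE /data_pos ltn_ord -ltnNge => -> ->. Qed.

Hypothesis m'_le : m' <= n - m.

Lemma stair_col_lt (l : 'I_m') : n - m - m' + l < n - m.
Proof. by have := ltn_ord l; lia. Qed.

Definition stair_col (l : 'I_m') : 'I_n := widen_ord (leq_subr m n) (Ordinal (stair_col_lt l)).

Lemma card_stair_rows_le (l : 'I_m') : #|stair_rows (stair_col l)| <= e l.
Proof.
apply: (@leq_trans #|[set i : 'I_r | r - e l <= i]|); last by rewrite card_ord_geq ?leq_subr //; lia.
apply/subset_leq_card/subsetP => i; rewrite !inE => /existsP[l' /andP[/eqP jl' /andP[il' _]]].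
by have -> : l = l' by apply/val_inj; move: jl' => /=; lia.
Qed.

Lemma tolerable_stair : tolerable m' e parity_cols stair_rows.
Proof.
move=> h; apply: leq_trans (leq_imset_card stair_col _).
apply/subset_leq_card/subsetP => j; rewrite inE => /andP[_ hL].
have /set0Pn[i] : stair_rows j != set0 by rewrite -card_gt0 (leq_ltn_trans _ hL).
rewrite inE => /existsP[l /andP[/eqP jl _]].
have jE : j = stair_col l by apply/val_inj.
apply/imsetP; exists l => //; rewrite inE.
by apply: leq_trans hL _; rewrite jE card_stair_rows_le.
Qed.

Lemma card_stair_pos : (forall l : 'I_m', e l <= r) ->
  #|[set p : 'I_r * 'I_n | stair_pos n r m m' e p.1 p.2]| = \sum_(l < m') e l.
Proof.
move=> e_le_r.
have -> : [set p : 'I_r * 'I_n | stair_pos n r m m' e p.1 p.2] =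
    (fun li : 'I_m' * 'I_r => (li.2, stair_col li.1)) @: [set li : 'I_m' * 'I_r | r - e li.1 <= li.2].
  apply/setP => -[i j]; rewrite !inE; apply/existsP/imsetP => [[l] | [[l i'] + [-> ->]]].
    case/andP=> /eqP jl /andP[il _]; exists (l, i); rewrite ?inE //.
    by congr (_, _); apply/val_inj.
  by rewrite inE => il; exists l; rewrite /stair_cell /= eqxx il ltn_ord.
rewrite card_imset; last first.
  move=> [l1 i1] [l2 i2] /= [-> /addnI l12].
  by congr (_, _); apply/val_inj.
rewrite -sum1dep_card.
transitivity (\sum_(l < m') \sum_(i < r | r - e l <= i) 1).
  by rewrite pair_big_dep.
apply: eq_bigr => l _; rewrite sum1dep_card card_ord_geq ?leq_subr //.
by have := e_le_r l; lia.
Qed.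

Lemma card_data_pos : (forall l : 'I_m', e l <= r) ->
  #|[set p : 'I_r * 'I_n | data_pos n r m m' e p.1 p.2]| = r * (n - m) - \sum_(l < m') e l.
Proof.
move=> e_le_r; rewrite -card_stair_pos //.
set St := [set p | stair_pos _ _ _ _ _ _ _].
set D := setX [set: 'I_r] [set j : 'I_n | j < n - m].
have St_D : St \subset D.
  apply/subsetP => -[i j]; rewrite !inE => /existsP[l /andP[/eqP -> _]].
  exact: stair_col_lt.
have -> : [set p : 'I_r * 'I_n | data_pos n r m m' e p.1 p.2] = D :\: St.
  by apply/setP => -[i j]; rewrite !inE /data_pos ltn_ord /= andbC.
by rewrite cardsD (setIidPr St_D) cardsX cardsT card_ord card_ord_ltn ?leq_subr.
Qed.

End ErasurePattern.

Local Open Scope ring_scope.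

Section LinearCode.
Variables (F : fieldType) (k eta : nat) (G : 'M[F]_(k, eta)).

Lemma codeword0 : codeword F k eta G 0.
Proof. by exists 0; rewrite mul0mx. Qed.

Lemma codewordD c d :
  codeword F k eta G c -> codeword F k eta G d -> codeword F k eta G (c + d).
Proof. by move=> [u ->] [v ->]; exists (u + v); rewrite mulmxDl. Qed.

Lemma codewordB c d :
  codeword F k eta G c -> codeword F k eta G d -> codeword F k eta G (c - d).
Proof. by move=> [u ->] [v ->]; exists (u - v); rewrite mulmxBl. Qed.

Lemma codewordZ a c : codeword F k eta G c -> codeword F k eta G (a *: c).
Proof. by move=> [u ->]; exists (a *: u); rewrite scalemxAl. Qed.

Lemma codeword_lincomb (I : finType) (a : I -> F) (c : I -> 'rV_eta) :
  (forall i, codeword F k eta G (c i)) -> codeword F k eta G (\sum_i a i *: c i).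
Proof.
move=> c_cw; apply: (big_ind (codeword F k eta G)); first exact: codeword0.
  exact: codewordD.
by move=> i _; apply: codewordZ.
Qed.

Lemma systematic_coord (u : 'rV_k) (j : 'I_eta) (j' : 'I_k) :
  systematic G -> j = j' :> nat -> (u *m G) 0 j = u 0 j'.
Proof.
move=> [_ G_id] jj; rewrite mxE (bigD1 j') //= big1 => [|i ij].
  by rewrite G_id ?jj // eqxx mulr1 addr0.
by rewrite G_id ?jj // -(inj_eq val_inj) /= in ij *; rewrite (negbTE ij) mulr0.
Qed.

Lemma MDS_eq0 (c : 'rV_eta) (A : {set 'I_eta}) :
  MDS G -> codeword F k eta G c -> (k <= #|A|)%N ->
  (forall j, j \in A -> c 0 j = 0) -> c = 0.
Proof.
move=> G_MDS c_cw /card_geqP[s [s_uniq s_size s_A]] c_A.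
apply: (G_MDS c 0 c_cw codeword0 [set x in s]).
  by rewrite cardsE (card_uniqP s_uniq).
by move=> j; rewrite inE => /s_A /c_A ->; rewrite mxE.
Qed.

End LinearCode.

Section StairCode.
Variables (F : fieldType) (n r m m' : nat) (e : nat -> nat).
Variables (Grow : 'M[F]_(n - m, n + m')) (Gcol : 'M[F]_(r, r + e m'.-1)).
Hypotheses (Grow_code : sys_MDS_code Grow) (Gcol_code : sys_MDS_code Gcol).
Local Notation E := (e m'.-1).
Hypothesis e_le_E : forall l : 'I_m', (e l <= E)%N.

Definition row_encoded (X : 'M[F]_(r, n)) (P : 'M[F]_(r, m')) :=
  forall i, codeword F (n - m) (n + m') Grow (row_mx (row i X) (row i P)).

Definition outer_parity (P : 'M[F]_(r, m')) (l : 'I_m') (h : 'I_E) : F :=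
  ((col l P)^T *m Gcol) 0 (rshift r h).

Section Kernel.
Variables (Z : 'M[F]_(r, n)) (P : 'M[F]_(r, m')).
Variables (Fs : {set 'I_n}) (L : 'I_n -> {set 'I_r}).
Hypothesis ZP_encoded : row_encoded Z P.
Hypothesis P_outer0 : forall (l : 'I_m') (h : 'I_E), (h < e l)%N -> outer_parity P l h = 0.
Hypotheses (Fs_small : (#|Fs| <= m)%N) (FsL_tolerable : tolerable m' e Fs L).
Hypothesis Z_erased : forall i j, j \notin Fs -> i \notin L j -> Z i j = 0.

Let ext i := row_mx (row i Z) (row i P).
Let column_code j := (col j Z)^T *m Gcol.
Let virtual_row (h : 'I_E) := \sum_i Gcol i (rshift r h) *: ext i.

Lemma virtual_row_codeword h : codeword F (n - m) (n + m') Grow (virtual_row h).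
Proof. exact: codeword_lincomb. Qed.

Lemma virtual_row_lshift h j : virtual_row h 0 (lshift m' j) = column_code j 0 (rshift r h).
Proof.
rewrite summxE [RHS]mxE; apply: eq_bigr => i _.
by rewrite mxE row_mxEl !mxE mulrC.
Qed.

Lemma virtual_row_rshift h l : virtual_row h 0 (rshift n l) = outer_parity P l h.
Proof.
rewrite summxE [RHS]mxE; apply: eq_bigr => i _.
by rewrite mxE row_mxEr !mxE mulrC.
Qed.

Lemma column_code_lshift j i : column_code j 0 (lshift E i) = Z i j.
Proof. by rewrite (systematic_coord (j' := i) _ Gcol_code.1) ?mxE. Qed.

Definition columns_cleared k :=
  forall j, j \notin Fs -> (#|L j| <= k)%N -> forall i, Z i j = 0.

Lemma virtual_row_eq0 (h : 'I_E) : columns_cleared h -> virtual_row h = 0.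
Proof.
move=> cleared.
apply: (MDS_eq0 (A := (@lshift n m' @: [set j | (j \notin Fs) && (#|L j| <= h)%N]) :|:
                      (@rshift n m' @: [set l : 'I_m' | (h < e l)%N])) Grow_code.2).
- exact: virtual_row_codeword.
- rewrite card_lshift_rshift.
  have := card_notin_split Fs (fun j => h < #|L j|)%N.
  have -> : [set j | (j \notin Fs) && ~~ (h < #|L j|)%N] =
            [set j | (j \notin Fs) && (#|L j| <= h)%N].
    by apply/setP => j; rewrite !inE -leqNgt.
  rewrite card_ord => card_Fs_compl; apply: leq_trans (leq_sub2l n Fs_small) _.
  by rewrite -card_Fs_compl addnC leq_add2l; apply: FsL_tolerable.
- move=> x /setUP[] /imsetP[y]; rewrite inE; last first.
    by move=> hy ->; rewrite virtual_row_rshift P_outer0.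
  case/andP=> yF Ly ->; rewrite virtual_row_lshift /column_code.
  have -> : col y Z = 0 by apply/matrixP => i k; rewrite !mxE cleared.
  by rewrite trmx0 mul0mx mxE.
Qed.

Lemma columns_clearedS k : (k < E)%N -> columns_cleared k -> columns_cleared k.+1.
Proof.
move=> k_lt cleared j jF Lj.
have row0 (h : 'I_E) : (h <= k)%N -> virtual_row h = 0.
  move=> hk; apply: virtual_row_eq0 => j' j'F Lj'.
  by apply: cleared => //; apply: leq_trans hk.
have code0 : column_code j = 0.
  apply: (MDS_eq0 (A := (@lshift r E @: ~: L j) :|: (@rshift r E @: [set h : 'I_E | (h < k.+1)%N]))
            Gcol_code.2).
  - by exists (col j Z)^T.
  - rewrite card_lshift_rshift card_ord_ltn // -(leq_add2l #|L j|) addnA cardsC.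
    by rewrite card_ord addnC leq_add2l.
  - move=> x /setUP[] /imsetP[y]; rewrite inE => y_in ->.
      by rewrite column_code_lshift Z_erased.
    by rewrite -virtual_row_lshift row0 ?mxE.
by move=> i; rewrite -column_code_lshift code0 mxE.
Qed.

Lemma columns_cleared_E : columns_cleared E.
Proof.
suff cleared k : (k <= E)%N -> columns_cleared k by exact: cleared.
elim: k => [_ j jF | k IH k_lt]; last exact: columns_clearedS (IH (ltnW k_lt)).
by rewrite leqn0 cards_eq0 => /eqP Lj0 i; apply: Z_erased; rewrite ?Lj0 ?inE.
Qed.

Lemma row_encoded_erased_eq0 : Z = 0.
Proof.
have L_le_E j : j \notin Fs -> (#|L j| <= E)%N.
  move=> jF; rewrite leqNgt; apply/negP => E_lt.
  have := FsL_tolerable E.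
  have -> : [set l : 'I_m' | (E < e l)%N] = set0.
    by apply/setP => l; rewrite !inE ltnNge e_le_E.
  by rewrite cards0 leqn0 cards_eq0 => /eqP/setP/(_ j); rewrite !inE jF E_lt.
apply/matrixP => i j; rewrite mxE.
have ext0 : ext i = 0.
  apply: (MDS_eq0 (A := @lshift n m' @: ~: Fs) Grow_code.2 (ZP_encoded i)).
    rewrite card_imset; last exact: lshift_inj.
    by rewrite cardsCs setCK card_ord leq_sub2l.
  move=> x /imsetP[y]; rewrite inE => yF ->.
  by rewrite row_mxEl mxE columns_cleared_E ?L_le_E.
move: (congr1 (fun v : 'rV_(n + m') => v 0 (lshift m' j)) ext0).
by rewrite row_mxEl !mxE.
Qed.
End Kernel.

Lemma row_encodedB X1 P1 X2 P2 :
  row_encoded X1 P1 -> row_encoded X2 P2 -> row_encoded (X1 - X2) (P1 - P2).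
Proof.
move=> enc1 enc2 i; rewrite !linearB /= -add_row_mx -opp_row_mx.
exact: codewordB.
Qed.

Lemma outer_parityB P1 P2 l h :
  outer_parity (P1 - P2) l h = outer_parity P1 l h - outer_parity P2 l h.
Proof. by rewrite /outer_parity !linearB /= mulmxBl [LHS]mxE [X in _ + X]mxE. Qed.

Lemma row_encoded_eq X1 P1 X2 P2 (Fs : {set 'I_n}) (L : 'I_n -> {set 'I_r}) :
  row_encoded X1 P1 -> row_encoded X2 P2 ->
  (forall (l : 'I_m') (h : 'I_E), (h < e l)%N -> outer_parity P1 l h = outer_parity P2 l h) ->
  (#|Fs| <= m)%N -> tolerable m' e Fs L ->
  (forall i j, j \notin Fs -> i \notin L j -> X1 i j = X2 i j) -> X1 = X2.
Proof.
move=> enc1 enc2 outer12 Fs_small tol X12; apply/eqP; rewrite -subr_eq0; apply/eqP.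
apply: (row_encoded_erased_eq0 (row_encodedB enc1 enc2) _ Fs_small tol).
  by move=> l h hl; rewrite outer_parityB outer12 ?subrr.
by move=> i j jF iL; rewrite !mxE X12 ?subrr.
Qed.

Lemma in_STAIR_eq X Y (Fs : {set 'I_n}) (L : 'I_n -> {set 'I_r}) :
  in_STAIR F n r m m' e Grow Gcol X -> in_STAIR F n r m m' e Grow Gcol Y ->
  (#|Fs| <= m)%N -> tolerable m' e Fs L ->
  (forall i j, j \notin Fs -> i \notin L j -> X i j = Y i j) -> X = Y.
Proof.
move=> [P [encX outX]] [Q [encY outY]] Fs_small tol XY.
by apply: (row_encoded_eq encX encY _ Fs_small tol XY) => l h hl; rewrite /outer_parity outX ?outY.
Qed.

Hypotheses (m'_le : (m' <= n - m)%N) (E_le_r : (E <= r)%N).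
Local Notation N := (n - m)%N.

Definition enc_array (U : 'M[F]_(r, N)) : 'M[F]_(r, n) := lsubmx (U *m Grow).
Definition enc_parity (U : 'M[F]_(r, N)) : 'M[F]_(r, m') := rsubmx (U *m Grow).

Lemma row_encoded_enc U : row_encoded (enc_array U) (enc_parity U).
Proof. by move=> i; rewrite -row_row_mx hsubmxK row_mul; exists (row i U). Qed.

Lemma enc_array_sys U i (j : 'I_n) (j' : 'I_N) : j = j' :> nat -> enc_array U i j = U i j'.
Proof.
move=> jj; have -> : enc_array U i j = (row i U *m Grow) 0 (lshift m' j) by rewrite -row_mul !mxE.
by rewrite (systematic_coord (j' := j') _ Grow_code.1) ?mxE.
Qed.

Definition outer_parity_at P l (h : nat) : F := oapp (outer_parity P l) 0 (insub h).

(* The array a message U for the row code produces, read at the data positions, with each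
   stair position showing the outside global parity indexed by it; (a) is its bijectivity. *)
Definition stair_view (U : 'M[F]_(r, N)) : 'M[F]_(r, N) :=
  \matrix_(i, j) if [pick l | stair_cell n r m e l i j] is Some l
                 then outer_parity_at (enc_parity U) l (i - (r - e l))%N else U i j.

Lemma stair_view_data U (i : 'I_r) (j : 'I_N) : ~~ stair_pos n r m m' e i j -> stair_view U i j = U i j.
Proof. by rewrite mxE; case: pickP => // l l_cell /existsP[]; exists l. Qed.

Lemma stair_view_outer (l : 'I_m') (h : 'I_E) : (h < e l)%N ->
  exists (i : 'I_r) (j : 'I_N), stair_pos n r m m' e i j /\
    forall U, stair_view U i j = outer_parity (enc_parity U) l h.
Proof.
move=> hl; have el := e_le_E l.
have i_lt : (r - e l + h < r)%N by lia.
pose i := Ordinal i_lt; pose j := Ordinal (stair_col_lt m'_le l).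
have cell : stair_cell n r m e l i j by rewrite /stair_cell /= eqxx /=; apply/andP; lia.
exists i, j; split=> [|U]; first by apply/existsP; exists l.
rewrite mxE; case: pickP => [l' cell' | /(_ l)]; last by rewrite cell.
have -> : l' = l.
  apply/val_inj/eqP; rewrite -(eqn_add2l (n - m - m')).
  by case/andP: cell' => /eqP <-.
by rewrite /= addKn /outer_parity_at valK.
Qed.

Lemma enc_array_data U (i : 'I_r) (j : 'I_n) (j' : 'I_N) :
  data_pos n r m m' e i j -> j = j' :> nat -> enc_array U i j = stair_view U i j'.
Proof.
by case/and3P=> _ _ not_stair jj; rewrite (enc_array_sys _ _ jj) stair_view_data // -jj.
Qed.

Lemma stair_view_inj : injective stair_view.
Proof.
move=> U V UV.
have XUV : enc_array U = enc_array V.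
  apply: (row_encoded_eq (row_encoded_enc U) (row_encoded_enc V) _
            (card_parity_cols n m) (tolerable_stair r e m'_le)).
    by move=> l h hl; have [i [j [_ view]]] := stair_view_outer hl; rewrite -!view UV.
  move=> i j jF iL; have jN : (j < N)%N by rewrite inE -ltnNge in jF.
  by rewrite !(enc_array_data (j' := Ordinal jN) _ (data_pos_survivor jF iL)) // UV.
apply/matrixP => i j.
have jj : widen_ord (leq_subr m n) j = j :> nat by [].
by rewrite -(@enc_array_sys U i _ _ jj) -(@enc_array_sys V i _ _ jj) XUV.
Qed.

Definition data_template (d : 'M[F]_(r, n)) : 'M[F]_(r, N) :=
  \matrix_(i, j) if stair_pos n r m m' e i j then 0 else d i (widen_ord (leq_subr m n) j).

Lemma in_STAIR_of_data d U : stair_view U = data_template d ->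
  exists! X, in_STAIR F n r m m' e Grow Gcol X /\
    forall (i : 'I_r) (j : 'I_n), data_pos n r m m' e i j -> X i j = d i j.
Proof.
move=> Ud.
have X_data (i : 'I_r) (j : 'I_n) : data_pos n r m m' e i j -> enc_array U i j = d i j.
  move=> dij; have /and3P[_ jN not_stair] := dij.
  rewrite (@enc_array_data U i j (Ordinal jN)) // Ud mxE (negbTE not_stair).
  by congr (d _ _); apply/val_inj.
have X_STAIR : in_STAIR F n r m m' e Grow Gcol (enc_array U).
  exists (enc_parity U); split; first exact: row_encoded_enc.
  move=> l h hl; have [i [j [stair view]]] := stair_view_outer hl.
  by rewrite -[LHS]/(outer_parity _ l h) -view Ud mxE stair.
exists (enc_array U); split=> // Y [Y_STAIR Y_data].
apply: (in_STAIR_eq X_STAIR Y_STAIR (card_parity_cols n m) (tolerable_stair r e m'_le)).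
by move=> i j jF iL; have dij := data_pos_survivor jF iL; rewrite X_data ?Y_data.
Qed.

End StairCode.

Unset Implicit Arguments.

Theorem mainTheorem3
  (F : finFieldType) (w n r m m' : nat) (e : nat -> nat)
  (HF : #|F| = (2 ^ w)%N)
  (Hm1 : (1 <= m)%N) (Hmn : (m < n)%N)
  (Hm'1 : (1 <= m')%N) (Hm'2 : (m' <= n - m)%N)
  (He0 : (0 < e 0)%N)
  (Hemono : forall l : nat, (l.+1 < m')%N -> (e l <= e l.+1)%N)
  (Her : (e m'.-1 <= r)%N)
  (Hw1 : (n + m' <= 2 ^ w)%N) (Hw2 : (r + e m'.-1 <= 2 ^ w)%N)
  (Grow : 'M[F]_(n - m, n + m')) (Gcol : 'M[F]_(r, r + e m'.-1))
  (Hrow : sys_MDS_code Grow) (Hcol : sys_MDS_code Gcol) :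
  let s := (\sum_(l < m') e l)%N in
  (* (a) *)
  (#|[set p : 'I_r * 'I_n | data_pos n r m m' e p.1 p.2]| = r * (n - m) - s)%N /\
  (forall d : 'M[F]_(r, n),
     exists! X : 'M[F]_(r, n),
       in_STAIR F n r m m' e Grow Gcol X /\
       (forall (i : 'I_r) (j : 'I_n), data_pos n r m m' e i j -> X i j = d i j)) /\
  (* (b) *)
  (forall (Fs : {set 'I_n}) (L : 'I_n -> {set 'I_r}),
     (#|Fs| <= m)%N ->
     let f := fail_sizes Fs L in
     let t := size f in
     (t <= m')%N ->
     (forall i : nat, (i < t)%N -> (nth 0%N f (t - 1 - i) <= e (m' - 1 - i))%N) ->
     forall X Y : 'M[F]_(r, n),
       in_STAIR F n r m m' e Grow Gcol X -> in_STAIR F n r m m' e Grow Gcol Y ->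
       (forall (i : 'I_r) (j : 'I_n), j \notin Fs -> i \notin L j -> X i j = Y i j) ->
       X = Y).
Proof.
(* HF, Hw1 and Hw2 only guarantee that MDS codes Grow and Gcol exist. *)
move=> s.
have e_mono : {in gtn m' &, {homo e : a b / (a <= b)%N}}.
  apply: homo_leq_in => [x | y x z | i j | i _]; [exact: leqnn | exact: leq_trans | |].
    by rewrite !unfold_in /= => _ j_lt k /andP[_ kj]; apply: ltn_trans kj j_lt.
  by rewrite unfold_in; apply: Hemono.
have e_le_E (l : 'I_m') : (e l <= e m'.-1)%N.
  apply: e_mono; rewrite ?unfold_in /= ?ltn_ord ?ltn_predL //.
  by rewrite -ltnS (ltn_predK (ltn_ord l)).
have e_le_r (l : 'I_m') : (e l <= r)%N := leq_trans (e_le_E l) Her.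
split; first exact: card_data_pos.
split=> [d | Fs L Fs_small f t t_le f_le X Y X_STAIR Y_STAIR XY].
  have [g _ gK] := injF_bij (stair_view_inj Hrow Hcol e_le_E Hm'2 Her).
  exact: in_STAIR_of_data (gK _).
apply: (in_STAIR_eq Hrow Hcol e_le_E X_STAIR Y_STAIR Fs_small _ XY).
exact: fail_sizes_tolerable e_mono t_le f_le.
Qed.
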